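(* (In $\mathbf{CZF}$.) The following are equivalent: (1) $\mathbf{LLPO}$; (2) for all $\alpha,\beta\in\mathbb{N}_\infty$, if $\alpha\vee\beta=1$ then $\alpha=1$ or $\beta=1$; (3) for every inhabited finitely enumerable set $F\subseteq\mathbb{N}_\infty$, if $\bigvee F=1$ then there exists $\alpha\in F$ with $\alpha=1$.
   Context: $\mathbf{CZF}$: constructive Zermelo–Fraenkel set theory. $\mathbf{LLPO}$: for every $\alpha:\mathbb{N}\to 2$ such that $\alpha(i)=\alpha(j)=1$ implies $i=j$, either $\alpha(2i)=0$ for all $i$, or $\alpha(2i+1)=0$ for all $i$. $\mathbb{N}_\infty=\{\alpha:\mathbb{N}\to 2\mid \forall i\leq j,\ \alpha(j)\leq\alpha(i)\}$ with the pointwise order; joins of finitely enumerable subsets are computed pointwise (pointwise max); $1$ is the constant function with value $1$. A set is finitely enumerable if it is the image of a surjection from some $n\in\mathbb{N}$. *)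

(* no classical axioms: the ambient logic is constructive,
   matching the CZF setting of the paper. *)
From Stdlib Require Import Arith Bool.
Open Scope bool_scope.

Definition LLPO : Prop :=
  forall alpha : nat -> bool,
    (forall i j, alpha i = true -> alpha j = true -> i = j) ->
    (forall i, alpha (2 * i) = false) \/ (forall i, alpha (2 * i + 1) = false).

Definition in_Ninf (alpha : nat -> bool) : Prop :=
  forall i j, i <= j -> Bool.le (alpha j) (alpha i).

(* the top element 1 of N_infinity; equality of sequences is extensional *)
Definition is_one (alpha : nat -> bool) : Prop := forall k, alpha k = true.

Definition join2 (alpha beta : nat -> bool) : nat -> bool :=
  fun k => alpha k || beta k.

(* join of the finitely enumerable family e 0, ..., e (n-1) (pointwise max) *)
Fixpoint join_fin (n : nat) (e : nat -> nat -> bool) : nat -> bool :=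
  fun k => match n with
           | 0 => false
           | S m => join_fin m e k || e m k
           end.

(* An element a of N_infinity equals 1 exactly when the
   sequence [first_false a], marking the unique place where a drops from
   true to false, is identically false; that sequence has at most one true
   entry.  If a \/ b = 1, the drops of a and b cannot both happen, so the
   interleaving of their drop sequences still has at most one true entry,
   and LLPO applied to it yields a = 1 or b = 1.  Conversely, for an
   alpha with at most one true entry, the sequences "alpha has no true
   entry at an even (resp. odd) position <= k" lie in N_infinity, their
   join is 1 because the single true entry has only one parity, and each
   of them is 1 precisely when the corresponding LLPO alternative holds.
   The finite version reduces to the binary one by induction, finite joins
   being iterated binary joins. *)

From Stdlib Require Import Arith.
From Stdlib Require Import Lia Bool.

Definition at_most_one_true (g : nat -> bool) : Prop :=
  forall i j, g i = true -> g j = true -> i = j.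

Definition top_join_prime : Prop :=
  forall alpha beta : nat -> bool,
    in_Ninf alpha -> in_Ninf beta ->
    is_one (join2 alpha beta) -> is_one alpha \/ is_one beta.

Definition top_fin_join_prime : Prop :=
  forall (n : nat) (e : nat -> nat -> bool),
    0 < n ->
    (forall i, i < n -> in_Ninf (e i)) ->
    is_one (join_fin n e) ->
    exists i, i < n /\ is_one (e i).

Lemma ninf_false_le (f : nat -> bool) i j :
  in_Ninf f -> i <= j -> f i = false -> f j = false.
Proof.
  intros Hf Hij Hi. specialize (Hf i j Hij). rewrite Hi in Hf.
  destruct (f j); [discriminate | reflexivity].
Qed.

Definition first_false (f : nat -> bool) (i : nat) : bool :=
  negb (f i) && match i with 0 => true | S p => f p end.

Lemma first_false_false f i : first_false f i = true -> f i = false.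
Proof. unfold first_false. destruct (f i); simpl; auto. Qed.

Lemma first_false_at_most_one f : in_Ninf f -> at_most_one_true (first_false f).
Proof.
  intros Hf.
  assert (Hlt : forall p q, p < q ->
            first_false f p = true -> first_false f q = true -> False).
  { intros p [|q] Hpq Hp Hq; [lia|].
    apply first_false_false in Hp.
    unfold first_false in Hq. apply andb_prop in Hq as [_ Hq].
    rewrite (ninf_false_le f p q Hf ltac:(lia) Hp) in Hq. discriminate. }
  intros p q Hp Hq. destruct (lt_eq_lt_dec p q) as [[H|H]|H]; auto.
  - exfalso; exact (Hlt p q H Hp Hq).
  - exfalso; exact (Hlt q p H Hq Hp).
Qed.

Lemma first_false_never_is_one f : (forall i, first_false f i = false) -> is_one f.
Proof.
  intros H k. induction k as [|p IH].
  - specialize (H 0). unfold first_false in H. destruct (f 0); auto.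
  - specialize (H (S p)). unfold first_false in H. rewrite IH in H.
    destruct (f (S p)); auto.
Qed.

Definition interleave (a b : nat -> bool) (k : nat) : bool :=
  if Nat.even k then a (Nat.div2 k) else b (Nat.div2 k).

Lemma interleave_even a b i : interleave a b (2 * i) = a i.
Proof. unfold interleave. now rewrite Nat.div2_double, Nat.even_mul. Qed.

Lemma interleave_odd a b i : interleave a b (2 * i + 1) = b i.
Proof.
  unfold interleave. replace (2 * i + 1) with (S (2 * i)) by lia.
  now rewrite Nat.div2_succ_double, Nat.even_succ, Nat.odd_mul.
Qed.

Lemma interleave_at_most_one a b :
  at_most_one_true a -> at_most_one_true b ->
  (forall p q, a p = true -> b q = true -> False) ->
  at_most_one_true (interleave a b).
Proof.
  intros Ha Hb Hab i j Hi Hj.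
  destruct (Nat.Even_or_Odd i) as [[p ->]|[p ->]];
  destruct (Nat.Even_or_Odd j) as [[q ->]|[q ->]];
  rewrite ?interleave_even, ?interleave_odd in Hi;
  rewrite ?interleave_even, ?interleave_odd in Hj.
  - now rewrite (Ha p q Hi Hj).
  - exfalso; exact (Hab p q Hi Hj).
  - exfalso; exact (Hab q p Hj Hi).
  - now rewrite (Hb p q Hi Hj).
Qed.

Lemma llpo_top_join_prime : LLPO -> top_join_prime.
Proof.
  intros llpo a b Ha Hb Hab.
  assert (no_two_drops : forall p q,
            first_false a p = true -> first_false b q = true -> False).
  { intros p q Hp Hq. apply first_false_false in Hp, Hq.
    specialize (Hab (Nat.max p q)). unfold join2 in Hab.
    rewrite (ninf_false_le a p _ Ha (Nat.le_max_l p q) Hp),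
            (ninf_false_le b q _ Hb (Nat.le_max_r p q) Hq) in Hab.
    discriminate. }
  destruct (llpo (interleave (first_false a) (first_false b))) as [H|H].
  - apply interleave_at_most_one; auto using first_false_at_most_one.
  - left. apply first_false_never_is_one. intros i.
    rewrite <- (interleave_even _ (first_false b)). apply H.
  - right. apply first_false_never_is_one. intros i.
    rewrite <- (interleave_odd (first_false a)). apply H.
Qed.

Fixpoint none_upto (g : nat -> bool) (k : nat) : bool :=
  match k with
  | 0 => negb (g 0)
  | S p => none_upto g p && negb (g (S p))
  end.

Lemma none_upto_true g k :
  none_upto g k = true <-> (forall m, m <= k -> g m = false).
Proof.
  induction k as [|p IH]; simpl.
  - split.
    + intros H m Hm. replace m with 0 by lia. now destruct (g 0).
    + intros H. now rewrite (H 0 (le_n 0)).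
  - rewrite andb_true_iff, IH, negb_true_iff. split.
    + intros [H H'] m Hm. destruct (Nat.eq_dec m (S p)) as [->|Hne]; auto.
      apply H. lia.
    + intros H. split; auto.
Qed.

Lemma none_upto_ninf g : in_Ninf (none_upto g).
Proof.
  intros i j Hij. destruct (none_upto g j) eqn:Hj; [|reflexivity].
  simpl. apply none_upto_true. intros m Hm.
  apply (proj1 (none_upto_true g j) Hj). lia.
Qed.

Lemma none_upto_is_one g : is_one (none_upto g) -> forall m, g m = false.
Proof. intros H m. exact (proj1 (none_upto_true g m) (H m) m (le_n m)). Qed.

Lemma none_upto_false g k : none_upto g k = false -> exists m, g m = true.
Proof.
  induction k as [|p IH]; simpl; intros H.
  - exists 0. now destruct (g 0).
  - destruct (none_upto g p); [|now apply IH].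
    exists (S p). now destruct (g (S p)).
Qed.

Lemma top_join_prime_llpo : top_join_prime -> LLPO.
Proof.
  intros prime alpha Halpha.
  set (ev := fun m => alpha (2 * m)). set (od := fun m => alpha (2 * m + 1)).
  destruct (prime (none_upto ev) (none_upto od)) as [H|H];
    auto using none_upto_ninf.
  - intros k. unfold join2.
    destruct (none_upto ev k) eqn:Hev; [reflexivity|].
    destruct (none_upto od k) eqn:Hod; [reflexivity|].
    destruct (none_upto_false ev k Hev) as [p Hp].
    destruct (none_upto_false od k Hod) as [q Hq].
    specialize (Halpha _ _ Hp Hq). lia.
  - left. exact (none_upto_is_one ev H).
  - right. exact (none_upto_is_one od H).
Qed.

Lemma join_fin_ninf n e :
  (forall i, i < n -> in_Ninf (e i)) -> in_Ninf (join_fin n e).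
Proof.
  induction n as [|m IH]; intros He i j Hij; simpl; [exact I|].
  pose proof (IH (fun i Hi => He i ltac:(lia)) i j Hij) as Hjoin.
  pose proof (He m ltac:(lia) i j Hij) as Hlast.
  destruct (join_fin m e i), (join_fin m e j), (e m i), (e m j);
    simpl in *; auto.
Qed.

Lemma top_join_prime_fin : top_join_prime -> top_fin_join_prime.
Proof.
  intros prime n. induction n as [|[|m] IH]; intros e Hn He Hone; [lia| |].
  - exists 0. split; [lia|]. exact Hone.
  - destruct (prime (join_fin (S m) e) (e (S m))) as [H|H]; auto.
    + apply join_fin_ninf. intros i Hi. apply He. lia.
    + destruct (IH e ltac:(lia) (fun i Hi => He i ltac:(lia)) H) as [i [Hi Hei]].
      exists i. split; auto.
    + exists (S m). split; auto.
Qed.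

Lemma top_fin_join_prime_binary : top_fin_join_prime -> top_join_prime.
Proof.
  intros prime a b Ha Hb Hab.
  destruct (prime 2 (fun i => if i =? 0 then a else b)) as [[|[|i]] [Hi H]];
    auto; try lia.
  intros [|i] Hi; auto.
Qed.

Theorem proposition4p7 :
  (LLPO <->
   (forall alpha beta : nat -> bool,
      in_Ninf alpha -> in_Ninf beta ->
      is_one (join2 alpha beta) -> is_one alpha \/ is_one beta))
  /\
  (LLPO <->
   (forall (n : nat) (e : nat -> nat -> bool),
      0 < n ->
      (forall i, i < n -> in_Ninf (e i)) ->
      is_one (join_fin n e) ->
      exists i, i < n /\ is_one (e i))).
Proof.
  split; split.
  - exact llpo_top_join_prime.
  - exact top_join_prime_llpo.
  - intros llpo. exact (top_join_prime_fin (llpo_top_join_prime llpo)).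
  - intros prime. exact (top_join_prime_llpo (top_fin_join_prime_binary prime)).
Qed.
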